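(* For every torus of tensor product $y=\gamma\otimes\hat\gamma$ one has $W(y)>2\pi^2$.
   Context: Let $\gamma:\mathbb{R}\to S^n\subset\mathbb{R}^{n+1}$ and $\hat\gamma:\mathbb{R}\to S^m\subset\mathbb{R}^{m+1}$ be smooth closed curves parametrized by arc length with periods equal to their lengths. For $x\in\mathbb{R}^{n+1}$, $\hat x\in\mathbb{R}^{m+1}$ the tensor product is $x\otimes\hat x=(x_i\hat x_j)_{i,j}\in\mathbb{R}^{(n+1)(m+1)}$ (lexicographic order). The torus of tensor product is $y=\gamma\otimes\hat\gamma:(s,\hat s)\mapsto\gamma(s)\otimes\hat\gamma(\hat s)\in S^{(n+1)(m+1)-1}$. For a closed immersed surface $x:M\to S^N$ with mean curvature vector $\vec H$ and Gauss curvature $K$, the Willmore functional is $W(x)=\int_M(|\vec H|^2-K+1)\,dM$. *)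

From Stdlib Require Import Reals Lra Lia.
Open Scope R_scope.

(* Vectors in R^d are functions nat -> R; only coordinates 0..d-1 matter. *)
Fixpoint rsum (d : nat) (f : nat -> R) : R :=
  match d with O => 0 | S k => rsum k f + f k end.

Definition dot (d : nat) (u v : nat -> R) : R := rsum d (fun k => u k * v k).
Definition vadd (u v : nat -> R) : nat -> R := fun k => u k + v k.
Definition vscal (c : R) (u : nat -> R) : nat -> R := fun k => c * u k.
Definition vsub (u v : nat -> R) : nat -> R := fun k => u k - v k.

Definition smooth (f : R -> R) : Prop :=
  exists D : nat -> R -> R,
    (forall x, D O x = f x) /\
    (forall k x, derivable_pt_lim (D k) x (D (S k) x)).

Definition closed_arclength_curve (n : nat) (L : R) (g : nat -> R -> R) : Prop :=
  0 < L /\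
  (forall i, (i <= n)%nat -> smooth (g i)) /\
  (forall s, rsum (S n) (fun i => g i s ^ 2) = 1) /\
  (forall s, exists v : nat -> R,
      (forall i, (i <= n)%nat -> derivable_pt_lim (g i) s (v i)) /\
      rsum (S n) (fun i => v i ^ 2) = 1) /\
  (forall s i, (i <= n)%nat -> g i (s + L) = g i s) /\
  (forall p, 0 < p -> (forall s i, (i <= n)%nat -> g i (s + p) = g i s) -> L <= p).

(* tensor product x (x) xh in R^((n+1)(m+1)), lexicographic order:
   component index i*(m+1)+j holds x_i * xh_j *)
Definition tensor (m : nat) (x xh : nat -> R) : nat -> R :=
  fun k => x (Nat.div k (S m)) * xh (Nat.modulo k (S m)).

Definition torus_tensor (m : nat) (g gh : nat -> R -> R) : R -> R -> nat -> R :=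
  fun s t => tensor m (fun i => g i s) (fun j => gh j t).

Definition surface_partials (d : nat) (X Xs Xt Xss Xst Xtt : R -> R -> nat -> R) : Prop :=
  forall s t k, (k < d)%nat ->
    derivable_pt_lim (fun u => X u t k) s (Xs s t k) /\
    derivable_pt_lim (fun u => X s u k) t (Xt s t k) /\
    derivable_pt_lim (fun u => Xs u t k) s (Xss s t k) /\
    derivable_pt_lim (fun u => Xs s u k) t (Xst s t k) /\
    derivable_pt_lim (fun u => Xt s u k) t (Xtt s t k).

Section Geometry.
(* pointwise data: position p in S^(d-1), tangent vectors a = X_s, b = X_t,
   second derivatives A = X_ss, B = X_st, C = X_tt *)
Variables (d : nat) (p a b A B C : nat -> R).

Definition gE := dot d a a.
Definition gF := dot d a b.
Definition gG := dot d b b.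
Definition gdet := gE * gG - gF * gF.

(* orthogonal projection onto the tangent plane span(a,b) *)
Definition tproj (v : nat -> R) : nat -> R :=
  vadd (vscal ((gG * dot d v a - gF * dot d v b) / gdet) a)
       (vscal ((gE * dot d v b - gF * dot d v a) / gdet) b).

Definition enormal (v : nat -> R) : nat -> R := vsub v (tproj v).
(* normal part in the sphere S^(d-1): also remove the position direction p *)
Definition snormal (v : nat -> R) : nat -> R :=
  vsub (enormal v) (vscal (dot d v p) p).

(* mean curvature vector of the surface in S^(d-1):
   H = (1/2) g^{ij} (X_ij)^perp *)
Definition mean_curv : nat -> R :=
  vscal (/ (2 * gdet))
    (vadd (vsub (vscal gG (snormal A)) (vscal (2 * gF) (snormal B)))
          (vscal gE (snormal C))).

(* Gauss curvature (via the Gauss equation for the surface in R^d) *)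
Definition gauss_curv : R :=
  (dot d (enormal A) (enormal C) - dot d (enormal B) (enormal B)) / gdet.

Definition willmore_density : R :=
  (dot d mean_curv mean_curv - gauss_curv + 1) * sqrt gdet.
End Geometry.

Definition willmore_integrand (d : nat) (X Xs Xt Xss Xst Xtt : R -> R -> nat -> R)
  (s t : R) : R :=
  willmore_density d (X s t) (Xs s t) (Xt s t) (Xss s t) (Xst s t) (Xtt s t).

(* Write y = g (x) gh with g, gh unit-speed closed curves on spheres of lengths L, Lh.
   The coordinate frame y_s = g' (x) gh, y_t = g (x) gh' is orthonormal and the second
   derivatives of y are normal to the surface, so the Willmore density reduces to
   1/2 + (|g''|^2 + |gh''|^2) / 4 and
     W(y) = L Lh / 2 + (Lh / 4) int |g''|^2 + (L / 4) int |gh''|^2.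
   The components of g' are L-periodic with zero mean, so Wirtinger's inequality gives
   int |g''|^2 >= (2 pi / L)^2 int |g'|^2 = 4 pi^2 / L, hence
   W(y) >= L Lh / 2 + pi^2 (Lh / L + L / Lh) > 2 pi^2. *)

From Stdlib Require Import Reals Lra Lia Psatz FunctionalExtensionality.
From Coquelicot Require Import Coquelicot.
Open Scope R_scope.

Implicit Types (f g h : R -> R) (a b c l x : R) (u v : nat -> R).

(* Retypes an equation stated in a Coquelicot module whose carrier is [R], so that
   [ring] and [field] recognise it. *)
Ltac R_eq := match goal with |- ?u = ?v => change (@eq R u v) end.

Lemma continuous_Rplus f g x :
  continuous f x -> continuous g x -> continuous (fun y => f y + g y) x.
Proof. apply (continuous_plus f g x). Qed.

Lemma continuous_Rminus f g x :
  continuous f x -> continuous g x -> continuous (fun y => f y - g y) x.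
Proof. apply (continuous_minus f g x). Qed.

Lemma continuous_Rmult f g x :
  continuous f x -> continuous g x -> continuous (fun y => f y * g y) x.
Proof. apply (continuous_mult f g x). Qed.

Lemma continuous_Rconst c x : continuous (fun _ => c) x.
Proof. apply continuous_const. Qed.

Lemma continuous_Rsqr f x : continuous f x -> continuous (fun y => f y ^ 2) x.
Proof.
  intros Hf. apply (continuous_ext (fun y => f y * (f y * 1))); [intros; simpl; ring|].
  apply continuous_Rmult; [|apply continuous_Rmult]; auto using continuous_Rconst.
Qed.

Lemma continuous_Rshift f c x : continuous f (x + c) -> continuous (fun y => f (y + c)) x.
Proof.
  intros Hf. apply (continuous_comp (fun y => y + c) f); [|exact Hf].
  apply continuous_Rplus; [apply continuous_id | apply continuous_Rconst].
Qed.

Lemma is_derive_continuous f l x : is_derive f x l -> continuous f x.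
Proof. intros H. apply (@ex_derive_continuous R_AbsRing R_NormedModule). eexists; eauto. Qed.

#[local] Hint Resolve continuous_Rplus continuous_Rminus continuous_Rmult
  continuous_Rconst continuous_Rsqr continuous_Rshift : continuity.

Lemma ex_RInt_cont f a b : (forall x, continuous f x) -> ex_RInt f a b.
Proof. intros Hf. apply (@ex_RInt_continuous R_CompleteNormedModule). auto. Qed.

#[local] Hint Resolve ex_RInt_cont : continuity.

Lemma RInt_Rplus f g a b : (forall x, continuous f x) -> (forall x, continuous g x) ->
  RInt (fun x => f x + g x) a b = RInt f a b + RInt g a b.
Proof. intros. apply (@RInt_plus R_CompleteNormedModule); auto with continuity. Qed.

Lemma RInt_Rscal f k a b : (forall x, continuous f x) ->
  RInt (fun x => k * f x) a b = k * RInt f a b.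
Proof. intros. apply (@RInt_scal R_CompleteNormedModule); auto with continuity. Qed.

Lemma RInt_Rconst c a b : RInt (fun _ => c) a b = (b - a) * c.
Proof. apply (@RInt_const R_CompleteNormedModule). Qed.

Lemma RInt_Rchasles f a b c : (forall x, continuous f x) ->
  RInt f a b + RInt f b c = RInt f a c.
Proof. intros. apply (@RInt_Chasles R_CompleteNormedModule); auto with continuity. Qed.

Lemma RInt_translate f c a b : (forall x, continuous f x) ->
  RInt (fun x => f (x + c)) a b = RInt f (a + c) (b + c).
Proof.
  intros Hf.
  transitivity (RInt (fun y => @scal R_AbsRing R_NormedModule 1 (f (1 * y + c))) a b).
  - apply RInt_ext. intros x _. change (f (x + c) = 1 * f (1 * x + c)).
    rewrite !Rmult_1_l. reflexivity.
  - rewrite (@RInt_comp_lin R_CompleteNormedModule); [|auto with continuity].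
    rewrite !Rmult_1_l. reflexivity.
Qed.

Section Periodic.
Variables (G : R -> R) (T : R).
Hypothesis G_cont : forall x, continuous G x.
Hypothesis G_per : forall x, G (x + T) = G x.

Lemma RInt_period_start a : RInt G a (a + T) = RInt G 0 T.
Proof.
  rewrite <- (RInt_Rchasles G a T (a + T)) by auto.
  replace (RInt G T (a + T)) with (RInt G 0 a).
  - rewrite Rplus_comm, RInt_Rchasles; auto.
  - replace T with (0 + T) at 1 by ring. rewrite <- RInt_translate by auto.
    apply RInt_ext. intros; symmetry; auto.
Qed.

Lemma RInt_period_translate c : RInt (fun x => G (x + c)) 0 T = RInt G 0 T.
Proof.
  rewrite RInt_translate by auto. rewrite Rplus_0_l, Rplus_comm.
  apply RInt_period_start.
Qed.

Lemma RInt_two_periods : RInt G 0 (2 * T) = 2 * RInt G 0 T :> R.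
Proof.
  rewrite <- (RInt_Rchasles G 0 T (2 * T)) by auto.
  replace (2 * T) with (T + T) by ring. rewrite RInt_period_start. ring.
Qed.

End Periodic.

(** * Wirtinger's inequality *)

Lemma Rle_of_scaled_le X Y : (forall c, 0 < c < 1 -> c ^ 2 * X <= Y) -> X <= Y.
Proof.
  intros H. destruct (Rle_or_lt X Y) as [|HYX]; [assumption|exfalso].
  destruct (Rle_or_lt X 0) as [HX|HX].
  - specialize (H (/ 2) ltac:(lra)). lra.
  - set (r := Rmax 0 (Y / X)).
    assert (Hr : 0 <= r < 1).
    { unfold r. split; [apply Rmax_l|]. apply Rmax_lub_lt; [lra|].
      apply Rmult_lt_reg_r with X; [lra|]. field_simplify; lra. }
    assert (HrX : Y <= r * X).
    { replace Y with (Y / X * X) by (field; lra).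
      apply Rmult_le_compat_r; [lra|apply Rmax_r]. }
    specialize (H ((1 + r) / 2) ltac:(lra)). nra.
Qed.

Section Dirichlet.
Variables (h h' : R -> R) (a l : R).
Hypothesis l_pos : 0 < l.
Hypothesis h_der : forall x, is_derive h x (h' x).
Hypothesis h'_cont : forall x, continuous h' x.
Hypothesis h_a : h a = 0.
Hypothesis h_al : h (a + l) = 0.

Let h_cont x : continuous h x.
Proof. exact (is_derive_continuous h (h' x) x (h_der x)). Qed.

(* For [k l < PI], [psi x = - k tan (k (x - a - l/2))] solves the Riccati equation
   [psi' = - k^2 - psi^2] on [[a, a + l]], so that
   [(h' - h psi)^2 = h'^2 - k^2 h^2 - (h^2 psi)']. *)
Lemma dirichlet_inequality_scaled (k : R) : 0 < k -> k * l < PI ->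
  k ^ 2 * RInt (fun x => h x ^ 2) a (a + l) <= RInt (fun x => h' x ^ 2) a (a + l).
Proof.
  intros Hk Hkl.
  set (m := a + l / 2).
  set (psi := fun x => - k * (sin (k * (x - m)) / cos (k * (x - m)))).
  assert (Hcos : forall x, a <= x <= a + l -> 0 < cos (k * (x - m))).
  { intros x Hx. apply cos_gt_0; unfold m; nra. }
  assert (Hpsi : forall x, a <= x <= a + l -> is_derive psi x (- k ^ 2 - psi x ^ 2)).
  { intros x Hx. specialize (Hcos x Hx). unfold psi. auto_derive.
    - replace (x + - m) with (x - m) by ring. lra.
    - replace (x + - m) with (x - m) by ring. field. lra. }
  assert (Cpsi : forall x, a <= x <= a + l -> continuous psi x)
    by (intros x Hx; exact (is_derive_continuous _ _ _ (Hpsi x Hx))).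
  set (F' := fun x => h' x ^ 2 - k ^ 2 * h x ^ 2 - (h' x - h x * psi x) ^ 2).
  assert (HF : is_RInt F' a (a + l) 0).
  { replace 0 with (minus (h (a + l) ^ 2 * psi (a + l)) (h a ^ 2 * psi a))
      by (rewrite h_a, h_al; unfold minus, plus, opp; simpl; ring).
    apply (@is_RInt_derive R_CompleteNormedModule (fun x => h x ^ 2 * psi x));
      intros x Hx; rewrite Rmin_left, Rmax_right in Hx by lra.
    - eapply is_derive_ext; [intros; reflexivity|].
      replace (F' x) with (2 * h x * h' x * psi x + h x ^ 2 * (- k ^ 2 - psi x ^ 2))
        by (unfold F'; ring).
      apply (is_derive_mult (fun y => h y ^ 2) psi x _ _); [| apply Hpsi; lra | apply Rmult_comm].
      replace (2 * h x * h' x) with (INR 2 * h' x * h x ^ 1) by (simpl; ring).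
      apply is_derive_pow, h_der.
    - unfold F'. assert (Hx' : a <= x <= a + l) by lra. auto 10 with continuity. }
  assert (Hle : RInt F' a (a + l) <= RInt (fun x => h' x ^ 2 - k ^ 2 * h x ^ 2) a (a + l)).
  { apply RInt_le; [lra | eexists; exact HF | apply ex_RInt_cont; auto with continuity |].
    intros x _. unfold F'. pose proof (pow2_ge_0 (h' x - h x * psi x)). lra. }
  rewrite (is_RInt_unique _ _ _ _ HF) in Hle.
  rewrite (RInt_ext _ (fun x => h' x ^ 2 + - k ^ 2 * h x ^ 2)) in Hle by (intros; R_eq; ring).
  rewrite RInt_Rplus, RInt_Rscal in Hle by auto with continuity.
  lra.
Qed.

Lemma dirichlet_inequality :
  (PI / l) ^ 2 * RInt (fun x => h x ^ 2) a (a + l) <= RInt (fun x => h' x ^ 2) a (a + l).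
Proof.
  pose proof PI_RGT_0.
  apply Rle_of_scaled_le. intros c Hc.
  replace (c ^ 2 * ((PI / l) ^ 2 * _)) with ((c * (PI / l)) ^ 2 * RInt (fun x => h x ^ 2) a (a + l))
    by ring.
  apply dirichlet_inequality_scaled.
  - apply Rmult_lt_0_compat; [lra|]. apply Rdiv_lt_0_compat; lra.
  - replace (c * (PI / l) * l) with (c * PI) by (field; lra). nra.
Qed.

End Dirichlet.

Lemma is_derive_translate f l c x :
  is_derive f (x + c) l -> is_derive (fun y => f (y + c)) x l.
Proof.
  intros Hf. replace l with (1 * l) by ring.
  apply (is_derive_comp f (fun y => y + c)); [exact Hf|].
  auto_derive; [exact I | ring].
Qed.

Lemma is_derive_eq f x l l' : is_derive f x l -> is_derive f x l' -> l = l'.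
Proof. intros H H'. rewrite <- (is_derive_unique f x l H). apply is_derive_unique, H'. Qed.

Lemma is_derive_periodic f f' L : (forall x, is_derive f x (f' x)) ->
  (forall x, f (x + L) = f x) -> forall x, f' (x + L) = f' x.
Proof.
  intros Hf HP x. apply (is_derive_eq f x); [|apply Hf].
  apply (is_derive_ext (fun y => f (y + L))); [intros; apply HP|].
  apply is_derive_translate, Hf.
Qed.

Lemma antiperiodic_has_zero h T : (forall x, continuous h x) ->
  (forall x, h (x + T) = - h x) -> exists a, h a = 0.
Proof.
  intros Hh HT.
  destruct (IVT_gen h 0 T 0) as [a [_ Ha]]; [| |exists a; exact Ha].
  - intros x. apply continuity_pt_filterlim, Hh.
  - pose proof (HT 0) as H0. rewrite Rplus_0_l in H0. rewrite H0.
    destruct (Rle_or_lt (h 0) 0);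
      [rewrite Rmin_left, Rmax_right | rewrite Rmin_right, Rmax_left]; lra.
Qed.

Lemma RInt_zero_has_zero h a b : a < b -> (forall x, continuous h x) ->
  RInt h a b = 0 -> exists c, h c = 0.
Proof.
  intros Hab Hh H0.
  assert (HD : forall x, is_derive (fun y => RInt h a y) x (h x)).
  { intros x. apply (is_derive_RInt h _ a); [|apply Hh].
    apply filter_forall. intros y. apply (@RInt_correct R_CompleteNormedModule).
    auto with continuity. }
  destruct (MVT_gen (fun y => RInt h a y) a b h) as [c [_ Hc]].
  - intros x _. apply HD.
  - intros x _. apply continuity_pt_filterlim, (is_derive_continuous _ _ _ (HD x)).
  - exists c. rewrite H0, RInt_point in Hc. change (0 - 0 = h c * (b - a)) in Hc. nra.
Qed.

Lemma dirichlet_inequality_periodic h h' T : 0 < T ->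
  (forall x, is_derive h x (h' x)) -> (forall x, continuous h' x) ->
  (exists a, h a = 0 /\ h (a + T) = 0) ->
  (forall x, h (x + T) ^ 2 = h x ^ 2) -> (forall x, h' (x + T) ^ 2 = h' x ^ 2) ->
  (PI / T) ^ 2 * RInt (fun x => h x ^ 2) 0 T <= RInt (fun x => h' x ^ 2) 0 T.
Proof.
  intros HT Hh Hh' [a [Ha HaT]] P P'.
  assert (Ch : forall x, continuous h x) by (intros x; exact (is_derive_continuous _ _ _ (Hh x))).
  rewrite <- (RInt_period_start (fun x => h x ^ 2) T) with (a := a) by auto with continuity.
  rewrite <- (RInt_period_start (fun x => h' x ^ 2) T) with (a := a) by auto with continuity.
  apply dirichlet_inequality; assumption.
Qed.

Lemma RInt_sqr_half_shift G L : (forall x, continuous G x) -> (forall x, G (x + L) = G x) ->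
  RInt (fun x => (/ 2 * (G x + G (x + L / 2))) ^ 2) 0 L
  + RInt (fun x => (/ 2 * (G x - G (x + L / 2))) ^ 2) 0 L = RInt (fun x => G x ^ 2) 0 L.
Proof.
  intros HG HP.
  rewrite <- RInt_Rplus by auto with continuity.
  rewrite (RInt_ext _ (fun x => / 2 * G x ^ 2 + / 2 * G (x + L / 2) ^ 2)) by (intros; R_eq; field).
  rewrite RInt_Rplus, !RInt_Rscal by auto with continuity.
  rewrite (RInt_period_translate (fun x => G x ^ 2)); auto with continuity.
  - field.
  - intros x. rewrite HP. reflexivity.
Qed.

(* The half-period shift splits [f] into [p], which is [L/2]-periodic with zero mean
   over a half period, and [q], which is [L/2]-antiperiodic; each therefore vanishes at
   two points [L/2] apart, and Dirichlet's inequality applies to both. *)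
Theorem wirtinger_inequality f f' L : 0 < L ->
  (forall x, is_derive f x (f' x)) -> (forall x, continuous f' x) ->
  (forall x, f (x + L) = f x) -> RInt f 0 L = 0 ->
  (2 * PI / L) ^ 2 * RInt (fun x => f x ^ 2) 0 L <= RInt (fun x => f' x ^ 2) 0 L.
Proof.
  intros HL Hf Hf' HP H0.
  assert (Cf : forall x, continuous f x) by (intros x; exact (is_derive_continuous _ _ _ (Hf x))).
  assert (HP' := is_derive_periodic f f' L Hf HP).
  set (T := L / 2).
  assert (HT : 0 < T) by (unfold T; lra).
  assert (HTT : forall x, x + T + T = x + L) by (intros; unfold T; field).
  set (p := fun x => / 2 * (f x + f (x + T))).
  set (p' := fun x => / 2 * (f' x + f' (x + T))).
  set (q := fun x => / 2 * (f x - f (x + T))).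
  set (q' := fun x => / 2 * (f' x - f' (x + T))).
  assert (Dp : forall x, is_derive p x (p' x)).
  { intros x. apply is_derive_scal, (is_derive_plus f); [|apply is_derive_translate]; apply Hf. }
  assert (Dq : forall x, is_derive q x (q' x)).
  { intros x. apply is_derive_scal, (is_derive_minus f); [|apply is_derive_translate]; apply Hf. }
  assert (Cp : forall x, continuous p x) by (unfold p; auto with continuity).
  assert (Cq : forall x, continuous q x) by (unfold q; auto with continuity).
  assert (Zp : exists a, p a = 0 /\ p (a + T) = 0).
  { destruct (RInt_zero_has_zero p 0 T) as [c Hc]; [lra|exact Cp| |].
    - unfold p. rewrite RInt_Rscal, RInt_Rplus, RInt_translate by auto with continuity.
      rewrite Rplus_0_l, RInt_Rchasles by auto.
      replace (T + T) with L by (unfold T; field). rewrite H0. R_eq; ring.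
    - exists c. unfold p in *. rewrite HTT, HP. lra. }
  assert (Zq : exists a, q a = 0 /\ q (a + T) = 0).
  { destruct (antiperiodic_has_zero q T Cq) as [a Ha].
    - intros x. unfold q. rewrite HTT, HP. ring.
    - exists a. unfold q in *. rewrite HTT, HP. lra. }
  assert (Pp : forall x, p (x + T) ^ 2 = p x ^ 2) by (intros; unfold p; rewrite HTT, HP; ring).
  assert (Pq : forall x, q (x + T) ^ 2 = q x ^ 2) by (intros; unfold q; rewrite HTT, HP; ring).
  assert (Pp' : forall x, p' (x + T) ^ 2 = p' x ^ 2)
    by (intros; unfold p'; rewrite HTT, HP'; ring).
  assert (Pq' : forall x, q' (x + T) ^ 2 = q' x ^ 2)
    by (intros; unfold q'; rewrite HTT, HP'; ring).
  assert (Bp := dirichlet_inequality_periodic p p' T HT Dp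
    ltac:(unfold p'; auto with continuity) Zp Pp Pp').
  assert (Bq := dirichlet_inequality_periodic q q' T HT Dq
    ltac:(unfold q'; auto with continuity) Zq Pq Pq').
  rewrite <- (RInt_sqr_half_shift f L), <- (RInt_sqr_half_shift f' L) by auto.
  fold T.
  replace L with (2 * T) by (unfold T; field).
  rewrite !(RInt_two_periods (fun x => _ ^ 2))
    by first [assumption | unfold p, q, p', q'; auto with continuity].
  replace (2 * PI / (2 * T)) with (PI / T) by (field; lra).
  unfold p, q, p', q' in Bp, Bq. lra.
Qed.

Lemma rsum_ext d (F G : nat -> R) :
  (forall k, (k < d)%nat -> F k = G k) -> rsum d F = rsum d G.
Proof.
  induction d as [|d IH]; intros H; simpl; [reflexivity|].
  rewrite IH, H; [reflexivity | lia | intros; apply H; lia].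
Qed.

Lemma rsum_plus d (F G : nat -> R) : rsum d (fun k => F k + G k) = rsum d F + rsum d G.
Proof. induction d as [|d IH]; simpl; [ring|]. rewrite IH. ring. Qed.

Lemma rsum_scal d c (F : nat -> R) : rsum d (fun k => c * F k) = c * rsum d F.
Proof. induction d as [|d IH]; simpl; [ring|]. rewrite IH. ring. Qed.

Lemma rsum_add (a b : nat) (F : nat -> R) :
  rsum (a + b) F = rsum a F + rsum b (fun k => F (a + k)%nat).
Proof.
  induction b as [|b IH]; simpl; [rewrite Nat.add_0_r; ring|].
  rewrite Nat.add_succ_r. simpl. rewrite IH. ring.
Qed.

Lemma rsum_le d (F G : nat -> R) :
  (forall k, (k < d)%nat -> F k <= G k) -> rsum d F <= rsum d G.
Proof.
  induction d as [|d IH]; intros H; simpl; [lra|].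
  apply Rplus_le_compat; [apply IH; intros; apply H|apply H]; lia.
Qed.

Lemma rsum_mul_rsum N m (F G : nat -> R) :
  rsum (N * S m) (fun k => F (k / S m)%nat * G (k mod S m)%nat) = rsum N F * rsum (S m) G.
Proof.
  induction N as [|N IH]; [simpl; ring|].
  replace (S N * S m)%nat with (N * S m + S m)%nat by lia.
  rewrite rsum_add, IH.
  rewrite (rsum_ext (S m) (fun k => F ((N * S m + k) / S m)%nat * G ((N * S m + k) mod S m)%nat)
             (fun k => F N * G k)).
  - rewrite rsum_scal. simpl (rsum (S N) F). ring.
  - intros k Hk. rewrite Nat.add_comm, Nat.div_add, Nat.div_small, Nat.Div0.mod_add,
      Nat.mod_small by lia. reflexivity.
Qed.

Lemma is_derive_rsum N (F : nat -> R -> R) (F' : nat -> R) x :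
  (forall k, (k < N)%nat -> is_derive (F k) x (F' k)) ->
  is_derive (fun y => rsum N (fun k => F k y)) x (rsum N F').
Proof.
  induction N as [|N IH]; intros H; simpl.
  - apply (is_derive_const 0 x).
  - apply (is_derive_plus (fun y => rsum N (fun k => F k y)) (F N));
      [apply IH; intros; apply H | apply H]; lia.
Qed.

Lemma continuous_rsum N (F : nat -> R -> R) x :
  (forall k, (k < N)%nat -> continuous (F k) x) -> continuous (fun y => rsum N (fun k => F k y)) x.
Proof.
  induction N as [|N IH]; intros H; simpl; auto with continuity.
  apply continuous_Rplus; [apply IH; intros; apply H | apply H]; lia.
Qed.

Lemma RInt_rsum N (F : nat -> R -> R) a b : (forall k x, (k < N)%nat -> continuous (F k) x) ->
  RInt (fun y => rsum N (fun k => F k y)) a b = rsum N (fun k => RInt (F k) a b).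
Proof.
  induction N as [|N IH]; intros H; simpl.
  - rewrite RInt_Rconst. ring.
  - rewrite RInt_Rplus, IH; auto.
    intros x. apply continuous_rsum. auto.
Qed.

Definition eqon (d : nat) (u v : nat -> R) := forall k, (k < d)%nat -> u k = v k.

Lemma dot_comm d u v : dot d u v = dot d v u.
Proof. apply rsum_ext. intros; ring. Qed.

Lemma dot_eqon d (u u' v v' : nat -> R) : eqon d u u' -> eqon d v v' -> dot d u v = dot d u' v'.
Proof. intros Hu Hv. apply rsum_ext. intros k Hk. rewrite Hu, Hv; auto. Qed.

Lemma dot_tensor n m (x x' y y' : nat -> R) :
  dot (S n * S m) (tensor m x y) (tensor m x' y') = dot (S n) x x' * dot (S m) y y'.
Proof. unfold dot, tensor. rewrite <- rsum_mul_rsum. apply rsum_ext. intros; ring. Qed.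

Lemma dot_eqon_tensor n m u v (x x' y y' : nat -> R) :
  eqon (S n * S m) u (tensor m x y) -> eqon (S n * S m) v (tensor m x' y') ->
  dot (S n * S m) u v = dot (S n) x x' * dot (S m) y y'.
Proof. intros Hu Hv. rewrite (dot_eqon _ _ _ _ _ Hu Hv). apply dot_tensor. Qed.

(** * Closed curves on spheres *)

Lemma smooth_derive f : smooth f -> (forall x, is_derive f x (Derive f x)) /\ smooth (Derive f).
Proof.
  intros [D [D0 HD]].
  assert (Hf : forall x, is_derive f x (D 1%nat x)).
  { intros x. apply (is_derive_ext (D O)); [intros; apply D0|]. apply is_derive_Reals, HD. }
  assert (E : forall x, Derive f x = D 1%nat x) by (intros; apply is_derive_unique, Hf).
  split.
  - intros x. rewrite E. apply Hf.
  - exists (fun k => D (S k)). split; [intros; symmetry; apply E | intros; apply HD].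
Qed.

Lemma smooth_continuous f : smooth f -> forall x, continuous f x.
Proof. intros Hf x. apply (is_derive_continuous f (Derive f x)), smooth_derive, Hf. Qed.

Definition curve_derive (g : nat -> R -> R) : nat -> R -> R := fun i => Derive (g i).

Definition vec_at (g : nat -> R -> R) (s : R) : nat -> R := fun i => g i s.

Lemma is_derive_dot d (u v u' v' : nat -> R -> R) x :
  (forall k, (k < d)%nat -> is_derive (u k) x (u' k x)) ->
  (forall k, (k < d)%nat -> is_derive (v k) x (v' k x)) ->
  is_derive (fun y => dot d (vec_at u y) (vec_at v y)) x
    (dot d (vec_at u' x) (vec_at v x) + dot d (vec_at u x) (vec_at v' x)).
Proof.
  intros Hu Hv. unfold dot, vec_at. rewrite <- rsum_plus.
  apply (is_derive_rsum d (fun k y => u k y * v k y)). intros k Hk.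
  apply (is_derive_mult (u k) (v k)); [apply Hu | apply Hv | apply Rmult_comm]; lia.
Qed.

Lemma is_derive_constant_eq F c x l : (forall y, F y = c) -> is_derive F x l -> l = 0.
Proof.
  intros HF HD. apply (is_derive_eq F x); [exact HD|].
  apply (is_derive_ext (fun _ => c)); [intros; symmetry; apply HF | apply (is_derive_const c x)].
Qed.

Definition spherical_unit_speed_jet d (x0 x1 x2 : nat -> R) : Prop :=
  dot d x0 x0 = 1 /\ dot d x1 x1 = 1 /\ dot d x0 x1 = 0 /\ dot d x1 x2 = 0 /\ dot d x0 x2 = -1.

Section ClosedCurve.
Variables (n : nat) (L : R) (g : nat -> R -> R).
Hypothesis g_curve : closed_arclength_curve n L g.

Let g' := curve_derive g.
Let g'' := curve_derive g'.

Lemma closed_curve_smooth_derivatives : forall i, (i <= n)%nat ->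
  (forall s, is_derive (g i) s (g' i s)) /\ (forall s, is_derive (g' i) s (g'' i s)) /\
  smooth (g'' i).
Proof.
  intros i Hi. destruct g_curve as (_ & Hs & _).
  destruct (smooth_derive _ (Hs i Hi)) as [D1 S1].
  destruct (smooth_derive _ S1) as [D2 S2].
  split; [exact D1 | split; [exact D2 | exact S2]].
Qed.

(* Differentiate [|g|^2 = 1], [|g'|^2 = 1] and [g . g' = 0]. *)
Lemma closed_curve_jet s : spherical_unit_speed_jet (S n) (vec_at g s) (vec_at g' s) (vec_at g'' s).
Proof.
  destruct g_curve as (_ & _ & Hsph & Hv & _).
  assert (D1 : forall k y, (k < S n)%nat -> is_derive (g k) y (g' k y))
    by (intros k y Hk; apply closed_curve_smooth_derivatives; lia).
  assert (D2 : forall k y, (k < S n)%nat -> is_derive (g' k) y (g'' k y))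
    by (intros k y Hk; apply closed_curve_smooth_derivatives; lia).
  assert (N0 : forall y, dot (S n) (vec_at g y) (vec_at g y) = 1).
  { intros y. rewrite <- (Hsph y). apply rsum_ext. intros; unfold vec_at; ring. }
  assert (N1 : forall y, dot (S n) (vec_at g' y) (vec_at g' y) = 1).
  { intros y. destruct (Hv y) as [w [Hw Hw1]]. rewrite <- Hw1. apply rsum_ext. intros k Hk.
    unfold vec_at, g', curve_derive. rewrite (is_derive_unique (g k) y (w k)); [ring|].
    apply is_derive_Reals, Hw. lia. }
  assert (O01 : forall y, dot (S n) (vec_at g y) (vec_at g' y) = 0).
  { intros y. pose proof (is_derive_constant_eq _ _ _ _ N0 (is_derive_dot _ g g g' g' y
      (fun k Hk => D1 k y Hk) (fun k Hk => D1 k y Hk))) as E.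
    rewrite dot_comm in E. lra. }
  assert (O12 : dot (S n) (vec_at g' s) (vec_at g'' s) = 0).
  { pose proof (is_derive_constant_eq _ _ _ _ N1 (is_derive_dot _ g' g' g'' g'' s
      (fun k Hk => D2 k s Hk) (fun k Hk => D2 k s Hk))) as E.
    rewrite dot_comm in E. lra. }
  assert (O02 : dot (S n) (vec_at g s) (vec_at g'' s) = -1).
  { pose proof (is_derive_constant_eq _ _ _ _ O01 (is_derive_dot _ g g' g' g'' s
      (fun k Hk => D1 k s Hk) (fun k Hk => D2 k s Hk))) as E.
    rewrite N1 in E. lra. }
  repeat split; auto.
Qed.

Lemma continuous_closed_curve_acc_sqr s :
  continuous (fun s => dot (S n) (vec_at g'' s) (vec_at g'' s)) s.
Proof.
  apply (continuous_rsum (S n) (fun k s => g'' k s * g'' k s)). intros k Hk.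
  apply continuous_Rmult; apply smooth_continuous, closed_curve_smooth_derivatives; lia.
Qed.

Lemma closed_curve_bending_energy :
  4 * PI ^ 2 / L <= RInt (fun s => dot (S n) (vec_at g'' s) (vec_at g'' s)) 0 L.
Proof.
  destruct g_curve as (HL & _ & _ & _ & Hper & _).
  assert (C1 : forall i x, (i <= n)%nat -> continuous (g' i) x).
  { intros i x Hi. apply (is_derive_continuous _ (g'' i x)), closed_curve_smooth_derivatives, Hi. }
  assert (C2 : forall i x, (i <= n)%nat -> continuous (g'' i) x).
  { intros i x Hi. apply smooth_continuous, closed_curve_smooth_derivatives, Hi. }
  assert (W : forall i, (i <= n)%nat ->
    (2 * PI / L) ^ 2 * RInt (fun x => g' i x ^ 2) 0 L <= RInt (fun x => g'' i x ^ 2) 0 L).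
  { intros i Hi. destruct (closed_curve_smooth_derivatives i Hi) as (D1 & D2 & _).
    apply wirtinger_inequality; auto.
    - intros x. apply is_derive_periodic with (f := g i); auto.
    - rewrite (is_RInt_unique (g' i) 0 L (minus (g i L) (g i 0))).
      + rewrite <- (Rplus_0_l L) at 1. rewrite Hper by exact Hi.
        unfold minus, plus, opp; simpl. ring.
      + apply (@is_RInt_derive R_CompleteNormedModule); auto. }
  unfold dot, vec_at. rewrite RInt_ext with (g := fun s => rsum (S n) (fun i => g'' i s ^ 2))
    by (intros; apply rsum_ext; intros; ring).
  rewrite RInt_rsum by (intros k x Hk; apply continuous_Rsqr, C2; lia).
  apply Rle_trans with (rsum (S n) (fun i => (2 * PI / L) ^ 2 * RInt (fun x => g' i x ^ 2) 0 L)).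
  - rewrite rsum_scal, <- (RInt_rsum (S n) (fun i x => g' i x ^ 2))
      by (intros k x Hk; apply continuous_Rsqr, C1; lia).
    rewrite (RInt_ext _ (fun _ => 1)), RInt_Rconst.
    + right. field. lra.
    + intros s _. rewrite <- (proj1 (proj2 (closed_curve_jet s))).
      apply rsum_ext. intros; unfold vec_at; ring.
  - apply rsum_le. intros k Hk. apply W. lia.
Qed.

End ClosedCurve.

(** * The Willmore functional of a torus of tensor product *)

Lemma dot_comb3 d (u1 u2 u3 : nat -> R) c1 c2 c3 :
  dot d (fun k => c1 * u1 k + c2 * u2 k + c3 * u3 k) (fun k => c1 * u1 k + c2 * u2 k + c3 * u3 k)
  = c1 ^ 2 * dot d u1 u1 + c2 ^ 2 * dot d u2 u2 + c3 ^ 2 * dot d u3 u3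
    + 2 * c1 * c2 * dot d u1 u2 + 2 * c1 * c3 * dot d u1 u3 + 2 * c2 * c3 * dot d u2 u3.
Proof.
  unfold dot.
  rewrite (rsum_ext _ _ (fun k => (c1 ^ 2 * (u1 k * u1 k) + c2 ^ 2 * (u2 k * u2 k)
     + c3 ^ 2 * (u3 k * u3 k)) + (2 * c1 * c2 * (u1 k * u2 k) + 2 * c1 * c3 * (u1 k * u3 k)
     + 2 * c2 * c3 * (u2 k * u3 k)))) by (intros; ring).
  rewrite !rsum_plus, !rsum_scal. ring.
Qed.

(* With [a, b] orthonormal and [A, B, C] normal to the surface, the mean curvature vector
   is [(A + C) / 2 + p] and the Gauss curvature is [A.C - |B|^2]. *)
Lemma willmore_density_orthonormal d (p a b A B C : nat -> R) :
  dot d p p = 1 -> dot d a a = 1 -> dot d a b = 0 -> dot d b b = 1 ->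
  dot d A a = 0 -> dot d A b = 0 -> dot d A p = -1 ->
  dot d B a = 0 -> dot d B b = 0 -> dot d B p = 0 ->
  dot d C a = 0 -> dot d C b = 0 -> dot d C p = -1 ->
  dot d A C = 1 -> dot d B B = 1 ->
  willmore_density d p a b A B C = 1 + (dot d A A + dot d C C - 2) / 4.
Proof.
  intros Hpp Haa Hab Hbb HAa HAb HAp HBa HBb HBp HCa HCb HCp HAC HBB.
  assert (ED : gdet d a b = 1) by (unfold gdet, gE, gF, gG; rewrite Haa, Hab, Hbb; ring).
  assert (EN : forall v, dot d v a = 0 -> dot d v b = 0 -> enormal d a b v = v).
  { intros v Hva Hvb. extensionality k. unfold enormal, tproj, vsub, vadd, vscal.
    rewrite ED, Hva, Hvb. field. }
  assert (HM : mean_curv d p a b A B C = fun k => / 2 * A k + / 2 * C k + 1 * p k).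
  { unfold mean_curv, snormal, gE, gF, gG. rewrite !EN, ED, Haa, Hab, Hbb, HAp, HBp, HCp
      by assumption.
    extensionality k. unfold vscal, vadd, vsub. field. }
  unfold willmore_density, gauss_curv. rewrite HM, dot_comb3, !EN, ED by assumption.
  rewrite Hpp, HAC, HBB, HAp, HCp, sqrt_1. field.
Qed.

Lemma willmore_density_tensor n m (x0 x1 x2 y0 y1 y2 p a b A B C : nat -> R) :
  spherical_unit_speed_jet (S n) x0 x1 x2 -> spherical_unit_speed_jet (S m) y0 y1 y2 ->
  eqon (S n * S m) p (tensor m x0 y0) ->
  eqon (S n * S m) a (tensor m x1 y0) -> eqon (S n * S m) b (tensor m x0 y1) ->
  eqon (S n * S m) A (tensor m x2 y0) -> eqon (S n * S m) B (tensor m x1 y1) ->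
  eqon (S n * S m) C (tensor m x0 y2) ->
  willmore_density (S n * S m) p a b A B C = 1 + (dot (S n) x2 x2 + dot (S m) y2 y2 - 2) / 4.
Proof.
  intros (X00 & X11 & X01 & X12 & X02) (Y00 & Y11 & Y01 & Y12 & Y02) Hp Ha Hb HA HB HC.
  rewrite willmore_density_orthonormal.
  all: repeat (erewrite dot_eqon_tensor by eassumption).
  all: rewrite ?(dot_comm _ x1 x0), ?(dot_comm _ x2 x0), ?(dot_comm _ x2 x1),
    ?(dot_comm _ y1 y0), ?(dot_comm _ y2 y0), ?(dot_comm _ y2 y1).
  all: rewrite ?X00, ?X11, ?X01, ?X12, ?X02, ?Y00, ?Y11, ?Y01, ?Y12, ?Y02; field.
Qed.

Lemma is_derive_mult_const f l c x : is_derive f x l -> is_derive (fun y => f y * c) x (l * c).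
Proof.
  intros Hf. apply (is_derive_ext (fun y => c * f y)); [intros; apply Rmult_comm|].
  rewrite Rmult_comm. apply is_derive_scal, Hf.
Qed.

Section TensorTorus.
Variables (n m : nat) (L Lh : R) (g gh : nat -> R -> R).
Hypothesis g_curve : closed_arclength_curve n L g.
Hypothesis gh_curve : closed_arclength_curve m Lh gh.
Variables (Ys Yt Yss Yst Ytt : R -> R -> nat -> R).
Hypothesis Y_partials : surface_partials (S n * S m) (torus_tensor m g gh) Ys Yt Yss Yst Ytt.

Let g' := curve_derive g.
Let g'' := curve_derive g'.
Let gh' := curve_derive gh.
Let gh'' := curve_derive gh'.

Lemma torus_tensor_component_derivatives k : (k < S n * S m)%nat ->
  (forall u : R, is_derive (g (k / S m)%nat) u (g' (k / S m)%nat u)) /\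
  (forall u : R, is_derive (g' (k / S m)%nat) u (g'' (k / S m)%nat u)) /\
  (forall u : R, is_derive (gh (k mod S m)%nat) u (gh' (k mod S m)%nat u)) /\
  (forall u : R, is_derive (gh' (k mod S m)%nat) u (gh'' (k mod S m)%nat u)).
Proof.
  intros Hk.
  assert (Hi : (k / S m <= n)%nat) by (apply Nat.lt_succ_r, Nat.Div0.div_lt_upper_bound; lia).
  assert (Hj : (k mod S m <= m)%nat) by (apply Nat.lt_succ_r, Nat.mod_upper_bound; lia).
  destruct (closed_curve_smooth_derivatives n L g g_curve _ Hi) as (D1 & D2 & _).
  destruct (closed_curve_smooth_derivatives m Lh gh gh_curve _ Hj) as (E1 & E2 & _).
  split; [exact D1 | split; [exact D2 | split; [exact E1 | exact E2]]].
Qed.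

Lemma torus_tensor_partials s t :
  eqon (S n * S m) (Ys s t) (tensor m (vec_at g' s) (vec_at gh t)) /\
  eqon (S n * S m) (Yt s t) (tensor m (vec_at g s) (vec_at gh' t)) /\
  eqon (S n * S m) (Yss s t) (tensor m (vec_at g'' s) (vec_at gh t)) /\
  eqon (S n * S m) (Yst s t) (tensor m (vec_at g' s) (vec_at gh' t)) /\
  eqon (S n * S m) (Ytt s t) (tensor m (vec_at g s) (vec_at gh'' t)).
Proof.
  unfold eqon, tensor, vec_at.
  assert (Ys_eq : forall k (u v : R), (k < S n * S m)%nat ->
    Ys u v k = g' (k / S m)%nat u * gh (k mod S m)%nat v).
  { intros k u v H. destruct (Y_partials u v k H) as (D & _).
    destruct (torus_tensor_component_derivatives k H) as (D1 & _).
    apply (is_derive_eq _ u _ _ (proj2 (is_derive_Reals _ _ _) D)).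
    apply is_derive_mult_const, D1. }
  assert (Yt_eq : forall k (u v : R), (k < S n * S m)%nat ->
    Yt u v k = g (k / S m)%nat u * gh' (k mod S m)%nat v).
  { intros k u v H. destruct (Y_partials u v k H) as (_ & D & _).
    destruct (torus_tensor_component_derivatives k H) as (_ & _ & E1 & _).
    apply (is_derive_eq _ v _ _ (proj2 (is_derive_Reals _ _ _) D)).
    apply is_derive_scal, E1. }
  split; [|split]; [intros k H; apply Ys_eq, H | intros k H; apply Yt_eq, H |].
  split; [|split]; intros k H; destruct (Y_partials s t k H) as (_ & _ & Dss & Dst & Dtt);
    destruct (torus_tensor_component_derivatives k H) as (D1 & D2 & E1 & E2).
  - apply (is_derive_eq _ s _ _ (proj2 (is_derive_Reals _ _ _) Dss)).
    apply (is_derive_ext (fun y => g' (k / S m)%nat y * gh (k mod S m)%nat t));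
      [intros; symmetry; apply Ys_eq, H|].
    apply is_derive_mult_const, D2.
  - apply (is_derive_eq _ t _ _ (proj2 (is_derive_Reals _ _ _) Dst)).
    apply (is_derive_ext (fun y => g' (k / S m)%nat s * gh (k mod S m)%nat y));
      [intros; symmetry; apply Ys_eq, H|].
    apply is_derive_scal, E1.
  - apply (is_derive_eq _ t _ _ (proj2 (is_derive_Reals _ _ _) Dtt)).
    apply (is_derive_ext (fun y => g (k / S m)%nat s * gh' (k mod S m)%nat y));
      [intros; symmetry; apply Yt_eq, H|].
    apply is_derive_scal, E2.
Qed.

Lemma willmore_integrand_torus_tensor s t :
  willmore_integrand (S n * S m) (torus_tensor m g gh) Ys Yt Yss Yst Ytt s t =
  1 + (dot (S n) (vec_at g'' s) (vec_at g'' s)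
       + dot (S m) (vec_at gh'' t) (vec_at gh'' t) - 2) / 4.
Proof.
  destruct (torus_tensor_partials s t) as (Ha & Hb & HA & HB & HC).
  apply (willmore_density_tensor n m (vec_at g s) (vec_at g' s) (vec_at g'' s)
    (vec_at gh t) (vec_at gh' t) (vec_at gh'' t)); try assumption.
  - apply (closed_curve_jet n L g g_curve).
  - apply (closed_curve_jet m Lh gh gh_curve).
  - intros k _. reflexivity.
Qed.

End TensorTorus.

Lemma willmore_tensor_lower_bound L Lh E Eh : 0 < L -> 0 < Lh ->
  4 * PI ^ 2 / L <= E -> 4 * PI ^ 2 / Lh <= Eh ->
  L * Lh / 2 + L * Eh / 4 + Lh * E / 4 > 2 * PI ^ 2.
Proof.
  intros HL HLh HE HEh.
  assert (A1 : Lh * E / 4 >= PI ^ 2 * (Lh / L)).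
  { apply Rle_ge. apply Rle_trans with (Lh * (4 * PI ^ 2 / L) / 4).
    - right. field. lra.
    - apply Rmult_le_compat_r; [lra|]. apply Rmult_le_compat_l; lra. }
  assert (A2 : L * Eh / 4 >= PI ^ 2 * (L / Lh)).
  { apply Rle_ge. apply Rle_trans with (L * (4 * PI ^ 2 / Lh) / 4).
    - right. field. lra.
    - apply Rmult_le_compat_r; [lra|]. apply Rmult_le_compat_l; lra. }
  assert (A3 : Lh / L + L / Lh - 2 = (L - Lh) ^ 2 / (L * Lh)) by (field; lra).
  assert (A4 : 0 <= (L - Lh) ^ 2 / (L * Lh)).
  { apply Rmult_le_pos; [apply pow2_ge_0 | apply Rlt_le, Rinv_0_lt_compat; nra]. }
  assert (0 < PI ^ 2) by (pose proof PI_RGT_0; nra).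
  nra.
Qed.

Theorem proposition3p7 (n m : nat) (L Lh : R) (g gh : nat -> R -> R)
  (Hg : closed_arclength_curve n L g) (Hgh : closed_arclength_curve m Lh gh)
  (Ys Yt Yss Yst Ytt : R -> R -> nat -> R)
  (HY : surface_partials (S n * S m) (torus_tensor m g gh) Ys Yt Yss Yst Ytt)
  (pr : forall s, Riemann_integrable
          (fun t => willmore_integrand (S n * S m) (torus_tensor m g gh)
                      Ys Yt Yss Yst Ytt s t) 0 Lh)
  (pr2 : Riemann_integrable (fun s => RiemannInt (pr s)) 0 L) :
  RiemannInt pr2 > 2 * PI ^ 2.
Proof.
  set (Q := fun s => dot (S n) (vec_at (curve_derive (curve_derive g)) s)
                               (vec_at (curve_derive (curve_derive g)) s)).
  set (Qh := fun t => dot (S m) (vec_at (curve_derive (curve_derive gh)) t)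
                                (vec_at (curve_derive (curve_derive gh)) t)).
  pose proof (continuous_closed_curve_acc_sqr n L g Hg) as CQ.
  pose proof (continuous_closed_curve_acc_sqr m Lh gh Hgh) as CQh.
  fold Q in CQ. fold Qh in CQh.
  assert (Inner : forall s, RiemannInt (pr s) = Lh / 2 + RInt Qh 0 Lh / 4 + Lh / 4 * Q s).
  { intros s. rewrite <- RInt_Reals.
    rewrite (RInt_ext _ (fun t => (1 + (Q s - 2) / 4) + / 4 * Qh t)).
    - rewrite RInt_Rplus, RInt_Rconst, RInt_Rscal by auto with continuity. field.
    - intros t _. rewrite (willmore_integrand_torus_tensor n m L Lh g gh Hg Hgh _ _ _ _ _ HY).
      fold (Q s) (Qh t). R_eq; field. }
  rewrite <- RInt_Reals, (RInt_ext _ (fun s => (Lh / 2 + RInt Qh 0 Lh / 4) + Lh / 4 * Q s))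
    by (intros; apply Inner).
  rewrite RInt_Rplus, RInt_Rconst, RInt_Rscal by auto with continuity.
  pose proof (willmore_tensor_lower_bound L Lh (RInt Q 0 L) (RInt Qh 0 Lh)
    (proj1 Hg) (proj1 Hgh) (closed_curve_bending_energy n L g Hg)
    (closed_curve_bending_energy m Lh gh Hgh)).
  lra.
Qed.
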